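(* Let $\varphi:\mathcal X\to\mathbb R^m$ be a feature map and let $p,q$ be probability distributions on $\mathcal X$ that have full support and are mutually absolutely continuous (so that $dp/dq$ is finite and strictly positive). Then $$F(p\|q,\varphi)\le D(p\|q),$$ with equality if and only if, for $\nu$-almost every $\rho$ in the support of $\nu$, there exists $\theta(\rho)\in\mathbb R^m$ such that for almost all $x\in\mathcal X$, $$\frac{\frac{dp}{dq}(x)-1}{\rho\frac{dp}{dq}(x)+1-\rho}=\theta(\rho)^\top\varphi(x).$$
   Context: Let $\nu$ be a probability measure on $[0,1]$ and define the convex function $f(t)=\int_0^1\frac12\frac{(t-1)^2}{\rho t+1-\rho}\,d\nu(\rho)$ for $t>0$ (these are exactly the operator-convex functions with $f(1)=f'(1)=0$, $f''(1)=1$; e.g. $d\nu(\rho)=2(1-\rho)d\rho$ gives $f(t)=t\log t-t+1$). The $f$-divergence is $D(p\|q)=\int_{\mathcal X} f\big(\frac{dp}{dq}(x)\big)\,dq(x)$. Standing assumption: $dp/dq$ exists and takes values in $[\alpha,1/\alpha]$ for some $\alpha\in(0,1]$. Moments: $\mu_p=\int\varphi\,dp$, $\mu_q=\int\varphi\,dq$, $\Sigma_p=\int\varphi\varphi^\top dp$, $\Sigma_q=\int\varphi\varphi^\top dq$ (assumed finite). The moment-based divergence is $$F(p\|q,\varphi)=\frac12\int_0^1(\mu_p-\mu_q)^\top(\rho\Sigma_p+(1-\rho)\Sigma_q)^{-1}(\mu_p-\mu_q)\,d\nu(\rho),$$ where, when the matrices are not invertible, this is understood as $\inf_{t:(0,1)\to\mathbb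 R}\frac12\int_0^1 t(\rho)\,d\nu(\rho)$ subject to $\begin{pmatrix}\rho\Sigma_p+(1-\rho)\Sigma_q & \mu_p-\mu_q\\ (\mu_p-\mu_q)^\top & t(\rho)\end{pmatrix}\succeq 0$ for all $\rho$ (at $\rho=0,1$ the matrix $\rho\Sigma_p+(1-\rho)\Sigma_q$ is $\Sigma_q$, resp. $\Sigma_p$). *)

From HB Require Import structures.
From mathcomp Require Import all_boot all_order all_algebra.
From mathcomp Require Import all_classical all_reals all_analysis.
Set Implicit Arguments. Unset Strict Implicit. Unset Printing Implicit Defensive.
Import Order.TTheory GRing.Theory Num.Theory.
Local Open Scope classical_set_scope.
Local Open Scope ring_scope.

Definition psd (R : realType) (n : nat) (A : 'M[R]_n) : Prop :=
  A^T = A /\ forall v : 'cV[R]_n, 0 <= (v^T *m A *m v) 0 0.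

Definition fgen (R : realType) (nu : probability R R) (t : R) : \bar R :=
  (\int[nu]_(rho in `[0%R, 1%R]) ((t - 1) ^+ 2 / (2 * (rho * t + 1 - rho)))%:E)%E.

(* f-divergence D(p||q) = \int f(dp/dq) dq, with g = dp/dq. *)
Definition fdiv (R : realType) d (X : measurableType d) (nu : probability R R)
  (q : probability X R) (g : X -> R) : \bar R :=
  (\int[q]_x fgen nu (g x))%E.

Definition mom1 (R : realType) d (X : measurableType d) (m : nat)
  (P : probability X R) (phi : X -> 'cV[R]_m) : 'cV[R]_m :=
  \col_i Rintegral P setT (fun x => phi x i 0).

Definition mom2 (R : realType) d (X : measurableType d) (m : nat)
  (P : probability X R) (phi : X -> 'cV[R]_m) : 'M[R]_m :=
  \matrix_(i, j) Rintegral P setT (fun x => phi x i 0 * phi x j 0).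

Definition blockF (R : realType) (m : nat) (Sp Sq : 'M[R]_m) (dmu : 'cV[R]_m)
  (rho t : R) : 'M[R]_(m + 1) :=
  block_mx (rho *: Sp + (1 - rho) *: Sq) dmu dmu^T (t%:M).

Definition Fmom (R : realType) d (X : measurableType d) (m : nat)
  (nu : probability R R) (p q : probability X R) (phi : X -> 'cV[R]_m) : \bar R :=
  ereal_inf [set ((2%:R^-1)%:E * \int[nu]_(rho in `[0%R, 1%R]) (t rho)%:E)%E
            | t in [set t : R -> R | measurable_fun setT t /\
                 forall rho, rho \in `[0%R, 1%R] ->
                   psd (blockF (mom2 p phi) (mom2 q phi) (mom1 p phi - mom1 q phi) rho (t rho))]].

From HB Require Import structures.
From mathcomp Require Import all_boot all_order all_algebra.
From mathcomp Require Import all_classical all_reals all_analysis.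
From mathcomp Require Import measurable_realfun.
From mathcomp Require Import ring lra.
Set Implicit Arguments. Unset Strict Implicit. Unset Printing Implicit Defensive.
Import Order.TTheory GRing.Theory Num.Theory.
Local Open Scope classical_set_scope.
Local Open Scope ring_scope.
Import numFieldNormedType.Exports.

(* Write [g = dp/dq], [w_rho = rho g + 1 - rho], [M_rho = rho Sp + (1 - rho) Sq] and
   [dmu = mu_p - mu_q].  Under [q] one has [M_rho = E[w_rho phi phi^T]] and
   [dmu = E[(g - 1) phi]], so with [D_rho = E[(g - 1)^2 / w_rho]] the quadratic form
   of the block matrix [[M_rho, dmu]; [dmu^T, D_rho]] at [(a, s)] is
   [E[w_rho (a^T phi + s (g - 1) / w_rho)^2] >= 0].  Hence the least feasible [t(rho)],
   namely [F_rho = sup_theta (2 theta^T dmu - theta^T M_rho theta)], is at most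
   [D_rho], with equality iff [(g - 1) / w_rho] is q-a.e. linear in [phi]; the
   supremum is attained at any solution of [M_rho theta = dmu], which exists because
   [a^T phi = 0] q-a.e. whenever [M_rho a = 0].  By Tonelli [D(p||q) = 1/2 \int D_rho
   dnu], and [F(p||q,phi) = 1/2 \int F_rho dnu] since [F_rho], a supremum of functions
   affine in [rho], is measurable; integrating over [rho] gives the inequality and its
   equality case. *)

Section vector_dot.
Variables (R : comPzRingType) (n : nat).
Implicit Types (u v : 'cV[R]_n) (M : 'M[R]_n).

Definition vdot u v : R := (u^T *m v) 0 0.

Definition qform M u : R := vdot u (M *m u).

Lemma vdotE u v : vdot u v = \sum_i u i 0 * v i 0.
Proof. by rewrite /vdot mxE; apply: eq_bigr => i _; rewrite mxE. Qed.

Lemma vdotC u v : vdot u v = vdot v u.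
Proof. by rewrite !vdotE; apply: eq_bigr => i _; rewrite mulrC. Qed.

Lemma vdotDl u1 u2 v : vdot (u1 + u2) v = vdot u1 v + vdot u2 v.
Proof. by rewrite !vdotE -big_split; apply: eq_bigr => i _; rewrite !mxE mulrDl. Qed.

Lemma vdotZl c u v : vdot (c *: u) v = c * vdot u v.
Proof. by rewrite !vdotE mulr_sumr; apply: eq_bigr => i _; rewrite !mxE mulrA. Qed.

Lemma vdotZr c u v : vdot u (c *: v) = c * vdot u v.
Proof. by rewrite vdotC vdotZl vdotC. Qed.

Lemma vdotNl u v : vdot (- u) v = - vdot u v.
Proof. by rewrite -scaleN1r vdotZl mulN1r. Qed.

Lemma vdotBr u v1 v2 : vdot u (v1 - v2) = vdot u v1 - vdot u v2.
Proof. by rewrite vdotC vdotDl vdotNl !(vdotC _ u). Qed.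

Lemma vdot_mulmx_sym M u v : M^T = M -> vdot u (M *m v) = vdot (M *m u) v.
Proof. by move=> sM; rewrite /vdot trmx_mul sM mulmxA. Qed.

Lemma qformDl M1 M2 u : qform (M1 + M2) u = qform M1 u + qform M2 u.
Proof. by rewrite /qform mulmxDl vdotC vdotDl !(vdotC _ u). Qed.

Lemma qformZl c M u : qform (c *: M) u = c * qform M u.
Proof. by rewrite /qform -scalemxAl vdotZr. Qed.

Lemma qformZr M c u : qform M (c *: u) = c ^+ 2 * qform M u.
Proof. by rewrite /qform linearZ /= vdotZl vdotZr mulrA expr2. Qed.

Lemma qform_outer u v : qform (v *m v^T) u = vdot u v ^+ 2.
Proof.
rewrite /qform -mulmxA [v^T *m u]mx11_scalar -/(vdot v u) mul_mx_scalar vdotZr.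
by rewrite vdotC expr2.
Qed.

End vector_dot.

Lemma sym_mulmx_solvable (F : fieldType) n (M : 'M[F]_n) (b : 'cV[F]_n) :
  M^T = M -> (forall a, M *m a = 0 -> vdot a b = 0) -> exists theta, M *m theta = b.
Proof.
move=> sM kerb.
have /submxP[D bD] : (b^T <= M)%MS.
  rewrite submxE; apply/eqP/matrixP => i j; rewrite !ord1 [RHS]mxE.
  have Mcol : M *m col j (cokermx M) = 0 by rewrite colE mulmxA mulmx_coker mul0mx.
  rewrite -(kerb _ Mcol) vdotE mxE; apply: eq_bigr => k _.
  by rewrite !mxE mulrC.
by exists D^T; apply: trmx_inj; rewrite trmx_mul sM trmxK bD.
Qed.

Section quadratic_block.
Variables (R : realType) (m : nat) (M : 'M[R]_m) (b : 'cV[R]_m).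

Definition block_quad a s T : R := qform M a + 2 * s * vdot a b + s ^+ 2 * T.

Definition gain theta : R := 2 * vdot theta b - qform M theta.

Lemma qform_block_mx T a s :
  qform (block_mx M b b^T T%:M) (col_mx a s%:M) = block_quad a s T.
Proof.
rewrite /qform /vdot /block_quad tr_col_mx mul_block_col mul_row_col tr_scalar_mx.
rewrite mulmxDr !mul_mx_scalar !mul_scalar_mx -scalemxAr.
rewrite -[b^T *m a]trmxK trmx_mul trmxK.
have -> : (a^T *m b)^T = (vdot a b)%:M by rewrite [LHS]mx11_scalar mxE.
set x := a^T *m (M *m a); have -> : qform M a = x 0 0 by [].
set y := a^T *m b; have -> : vdot a b = y 0 0 by [].
by clearbody x y; rewrite !mxE eqxx mulr1n /=; lra.
Qed.

Lemma psd_block_mxP T : M^T = M ->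
  psd (block_mx M b b^T T%:M) <-> forall a s, 0 <= block_quad a s T.
Proof.
move=> sM; split=> [[_ psdMb] a s|H].
  by rewrite -qform_block_mx /qform /vdot mulmxA; exact: psdMb.
split; first by rewrite tr_block_mx trmxK tr_scalar_mx sM.
move=> v; rewrite -mulmxA -[v]vsubmxK [dsubmx v]mx11_scalar.
by rewrite -/(vdot _ _) -/(qform _ _) qform_block_mx.
Qed.

Lemma block_quad_gain a s T : s != 0 ->
  block_quad a s T = s ^+ 2 * (T - gain (- s^-1 *: a)).
Proof. by move=> s0; rewrite /block_quad /gain qformZr vdotZl; field. Qed.

Lemma block_quad_gainN theta T : block_quad (- theta) 1 T = T - gain theta.
Proof. by rewrite block_quad_gain ?oner_eq0 // invr1 scaleN1r opprK expr1n mul1r. Qed.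

Lemma gain0 : gain 0 = 0.
Proof. by rewrite /gain /qform mulmx0 /vdot trmx0 !mul0mx mxE mulr0 subrr. Qed.

Lemma block_quad_ge0P T : (forall a, 0 <= qform M a) ->
  (forall a s, 0 <= block_quad a s T) <-> (forall theta, gain theta <= T).
Proof.
move=> Mge0; split=> [H theta|H a s].
  by have := H (- theta) 1; rewrite block_quad_gainN subr_ge0.
have [->|s0] := eqVneq s 0.
  by rewrite /block_quad mulr0 mul0r expr0n /= mul0r !addr0.
by rewrite block_quad_gain // mulr_ge0 ?sqr_ge0 // subr_ge0.
Qed.

Lemma gain_solution theta a : M^T = M -> M *m theta = b ->
  gain theta - gain a = qform M (theta - a).
Proof.
move=> sM Mtheta; rewrite /gain /qform -Mtheta mulmxBr vdotDl vdotNl !vdotBr.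
have cross : vdot theta (M *m a) = vdot a (M *m theta).
  by rewrite vdot_mulmx_sym // vdotC.
rewrite cross; lra.
Qed.

Lemma psd_qform_ge0 a : psd M -> 0 <= qform M a.
Proof. by case=> _ Mge0; rewrite /qform /vdot mulmxA; exact: Mge0. Qed.

Lemma gain_le_solution theta a : psd M -> M *m theta = b -> gain a <= gain theta.
Proof.
move=> psdM Mtheta; rewrite -subr_ge0 gain_solution //; first exact: psd_qform_ge0.
by case: psdM.
Qed.

(* For psd [M] and [b] in its range this is the Schur-complement value [b^T M^+ b],
   the least [T] making [block_mx M b b^T T%:M] psd. *)
Definition gain_sup : \bar R := ereal_sup (range (fun theta => (gain theta)%:E)).

Lemma gain_supE theta : psd M -> M *m theta = b -> gain_sup = (gain theta)%:E.
Proof.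
move=> psdM Mtheta; apply/eqP.
rewrite eq_le ereal_sup_ubound ?andbT; last by exists theta.
by apply: ub_ereal_sup => _ [a _ <-]; rewrite lee_fin; exact: gain_le_solution.
Qed.

End quadratic_block.

Section Rintegral_complements.
Context d (T : measurableType d) (R : realType) (mu : {measure set T -> \bar R}).

Lemma integrable_sum_EFin I (s : seq I) (f : I -> T -> R) :
  (forall i, mu.-integrable setT (EFin \o f i)) ->
  mu.-integrable setT (EFin \o (fun x => \sum_(i <- s) f i x)).
Proof.
move=> fi.
apply: (eq_integrable measurableT (fun x => (\sum_(i <- s) (EFin \o f i) x)%E)).
- by move=> x _ /=; rewrite sumEFin.
- by apply: (integrable_sum measurableT) => i _; exact: fi.
Qed.

Lemma Rintegral_sum I (s : seq I) (f : I -> T -> R) :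
  (forall i, mu.-integrable setT (EFin \o f i)) ->
  \int[mu]_x (\sum_(i <- s) f i x) = \sum_(i <- s) \int[mu]_x f i x.
Proof.
move=> fi; elim: s => [|i s IH].
  by under eq_Rintegral do rewrite big_nil; rewrite big_nil Rintegral_cst // mul0r.
rewrite big_cons -IH -RintegralD //; last exact: integrable_sum_EFin.
by apply: eq_Rintegral => x _; rewrite big_cons.
Qed.

Lemma ge0_Rintegral_eq0P (f : T -> R) :
  mu.-integrable setT (EFin \o f) -> (forall x, 0 <= f x) ->
  \int[mu]_x f x = 0 <-> {ae mu, forall x, f x = 0}.
Proof.
move=> fi f0; have mf := measurable_int _ fi.
have intf : (\int[mu]_x `|(EFin \o f) x|)%E = (\int[mu]_x f x)%:E.
  rewrite /Rintegral fineK ?(integrable_fin_num measurableT fi) //.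
  by apply: eq_integral => x _ /=; rewrite ger0_norm.
have [+ +] := ae_eq_integral_abs mu measurableT mf; rewrite intf => f0E Ef0.
split=> [E0|fae].
  by apply: filterS (f0E (congr1 EFin E0)) => x /(_ I) [].
by apply/EFin_inj/Ef0; apply: filterS fae => x /= ->.
Qed.

Lemma ae_eq0_Rintegral (f : T -> R) :
  measurable_fun setT f -> {ae mu, forall x, f x = 0} -> \int[mu]_x f x = 0.
Proof.
move=> mf fae; rewrite /Rintegral (ae_eq_integral (cst 0%E)) ?integral0 //.
- exact/measurable_EFinP.
- by apply: filterS fae => x /= ->.
Qed.

Section vector_integrals.
Variable n : nat.
Implicit Types (a : 'cV[R]_n) (f : T -> 'cV[R]_n) (F : T -> 'M[R]_n).

Lemma integrable_vdot a f :
  (forall i, mu.-integrable setT (EFin \o (fun x => f x i 0))) ->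
  mu.-integrable setT (EFin \o (fun x => vdot a (f x))).
Proof.
move=> fi; under eq_fun do rewrite vdotE.
by apply: integrable_sum_EFin => i; exact: (integrableZl measurableT _ (fi i)).
Qed.

Lemma Rintegral_vdot a f :
  (forall i, mu.-integrable setT (EFin \o (fun x => f x i 0))) ->
  \int[mu]_x vdot a (f x) = vdot a (\col_i \int[mu]_x f x i 0).
Proof.
move=> fi; under eq_Rintegral do rewrite vdotE.
rewrite Rintegral_sum => [|i]; last exact: (integrableZl measurableT _ (fi i)).
by rewrite vdotE; apply: eq_bigr => i _; rewrite RintegralZl // mxE.
Qed.

Let integrable_mulmx_entry a F i :
  (forall i j, mu.-integrable setT (EFin \o (fun x => F x i j))) ->
  mu.-integrable setT (EFin \o (fun x => (F x *m a) i 0)).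
Proof.
move=> Fi; under eq_fun do rewrite mxE.
by apply: integrable_sum_EFin => j; exact: (integrableZr measurableT _ (Fi i j)).
Qed.

Lemma integrable_qform a F :
  (forall i j, mu.-integrable setT (EFin \o (fun x => F x i j))) ->
  mu.-integrable setT (EFin \o (fun x => qform (F x) a)).
Proof. by move=> Fi; apply: integrable_vdot => i; exact: integrable_mulmx_entry. Qed.

Lemma Rintegral_qform a F :
  (forall i j, mu.-integrable setT (EFin \o (fun x => F x i j))) ->
  \int[mu]_x qform (F x) a = qform (\matrix_(i, j) \int[mu]_x F x i j) a.
Proof.
move=> Fi; rewrite /qform Rintegral_vdot => [|i]; last exact: integrable_mulmx_entry.
congr vdot; apply/matrixP => i k; rewrite !ord1 !mxE.
under eq_Rintegral do rewrite mxE.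
rewrite Rintegral_sum => [|j]; last exact: (integrableZr measurableT _ (Fi i j)).
by apply: eq_bigr => j _; rewrite RintegralZr // mxE.
Qed.

End vector_integrals.

End Rintegral_complements.

Lemma bounded_integrable d (T : measurableType d) (R : realType)
    (mu : {finite_measure set T -> \bar R}) (D : set T) (f : T -> R) (C : R) :
  measurable D -> measurable_fun D f -> (forall x, D x -> `|f x| <= C) ->
  mu.-integrable D (EFin \o f).
Proof.
move=> mD mf fC; apply: (le_integrable mD (g := EFin \o cst C)).
- exact/measurable_EFinP.
- move=> x Dx /=; rewrite !lee_fin (le_trans (fC x Dx)) //.
  by rewrite ger0_norm // (le_trans _ (fC x Dx)).
- exact: finite_measure_integrable_cst.
Qed.

Lemma le_integral_eq_ae d (T : measurableType d) (R : realType)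
    (mu : {measure set T -> \bar R}) (D : set T) (f h : T -> R) :
  measurable D -> mu.-integrable D (EFin \o f) -> mu.-integrable D (EFin \o h) ->
  (forall x, D x -> f x <= h x) ->
  (\int[mu]_(x in D) (f x)%:E = \int[mu]_(x in D) (h x)%:E)%E ->
  {ae mu, forall x, D x -> f x = h x}.
Proof.
move=> mD fi hi fh fhE.
have hfi : mu.-integrable D ((EFin \o h) \- (EFin \o f))%E by exact: integrableB.
have hf0 : (\int[mu]_(x in D) `|((EFin \o h) \- (EFin \o f))%E x|)%E = 0%E.
  rewrite (eq_integral (fun x => (EFin \o h) x - (EFin \o f) x))%E; last first.
    by move=> x /[!inE] Dx /=; rewrite -EFinB ger0_norm // subr_ge0 fh.
  by rewrite integralB // fhE subee // (integrable_fin_num mD hi).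
have := (ae_eq_integral_abs mu mD (measurable_int _ hfi)).1 hf0.
by apply: filterS => x + Dx => /(_ Dx) /= /eqP; rewrite -EFinB eqe subr_eq0 => /eqP.
Qed.

Lemma measurable_invr (R : realType) : measurable_fun [set: R] (@GRing.inv R).
Proof.
have -> : [set: R] = [set x | x != 0] `|` [set 0].
  by apply/seteqP; split => x //= _; case: (eqVneq x 0); [right|left].
have o0 : open [set x : R | x != 0] by exact: open_neq.
apply/measurable_funU => //; first exact: open_measurable.
split; last exact: measurable_fun_set1.
apply: open_continuous_measurable_fun => // x.
by rewrite inE => /= x0; exact: inv_continuous.
Qed.

Lemma lower_semicontinuous_sup (T : topologicalType) (R : realType) I
    (f : I -> T -> R) : (forall i, continuous (f i)) ->
  lower_semicontinuous (fun x => ereal_sup (range (fun i => (f i x)%:E))).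
Proof.
move=> fc; apply/lower_semicontinuousP => r.
have -> : [set x | r%:E < ereal_sup (range (fun i => (f i x)%:E))]%E =
    \bigcup_i (f i @^-1` [set y | r < y]).
  apply/seteqP; split => x /=.
    by case/ereal_sup_gt => _ [i _ <-]; rewrite lte_fin => ?; exists i.
  move=> [i _ rfi]; apply: (lt_le_trans _ (ereal_sup_ubound _)); last by exists i.
  by rewrite lte_fin.
by apply: bigcup_open => i _; apply: open_comp; [move=> x _; exact: fc|exact: open_gt].
Qed.

Section density.
Context d (X : measurableType d) (R : realType).
Variables (p : {finite_measure set X -> \bar R})
  (q : {sigma_finite_measure set X -> \bar R}) (g : X -> R).
Hypotheses (mg : measurable_fun setT g)
  (pg : forall A, measurable A -> p A = (\int[q]_(x in A) (g x)%:E)%E).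

Let pq : p `<< q.
Proof.
apply/null_content_dominatesP => A mA qA0; rewrite pg //.
exact/(null_set_integral mA _ qA0)/measurable_EFinP/measurable_funTS.
Qed.

Local Notation RN := (Radon_Nikodym (charge_of_finite_measure p) q).

Let RN_ae : ae_eq q setT RN (EFin \o g).
Proof.
apply: integral_ae_eq => //.
- exact: Radon_Nikodym_integrable.
- exact/measurable_EFinP.
- by move=> E _ mE; rewrite -Radon_Nikodym_integral // -pg.
Qed.

Lemma density_integral f :
  measurable_fun setT f -> p.-integrable setT (EFin \o f) ->
  (\int[q]_x (g x * f x)%:E = \int[p]_x (f x)%:E)%E.
Proof.
move=> mf pf; rewrite -(Radon_Nikodym_change_of_variables pq measurableT pf).
apply: ae_eq_integral => //.
- exact/measurable_EFinP/measurable_funM.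
- apply: emeasurable_funM; first exact/measurable_EFinP.
  exact/measurable_int/Radon_Nikodym_integrable.
- by apply: filterS RN_ae => x gx Tx; rewrite /= (gx Tx) -EFinM mulrC.
Qed.

Lemma density_Rintegral f :
  measurable_fun setT f -> p.-integrable setT (EFin \o f) ->
  \int[p]_x f x = \int[q]_x (g x * f x).
Proof. by move=> mf pf; rewrite /Rintegral density_integral. Qed.

Lemma density_integrable f : (forall x, 0 <= g x) ->
  measurable_fun setT f -> p.-integrable setT (EFin \o f) ->
  q.-integrable setT (EFin \o (fun x => g x * f x)).
Proof.
move=> g_ge0 mf pf; apply/integrableP; split.
  exact/measurable_EFinP/measurable_funM.
under eq_integral => x _ do rewrite /= normrM (ger0_norm (g_ge0 x)).
rewrite density_integral; last exact: integrable_norm.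
  by case/integrableP: pf.
exact: measurableT_comp.
Qed.

End density.

Section moment_divergence.
Variables (R : realType) (d : measure_display) (X : measurableType d) (m : nat)
  (phi : X -> 'cV[R]_m) (p q : probability X R) (g : X -> R) (alpha : R).
Hypotheses (alpha_gt0 : 0 < alpha) (alpha_le1 : alpha <= 1)
  (mg : measurable_fun setT g)
  (g_ge : forall x, alpha <= g x) (g_le : forall x, g x <= alpha^-1)
  (pg : forall A, measurable A -> p A = (\int[q]_(x in A) (g x)%:E)%E)
  (p_phi : forall i, p.-integrable setT (fun x => (phi x i 0)%:E))
  (q_phi : forall i, q.-integrable setT (fun x => (phi x i 0)%:E))
  (p_phi2 : forall i j, p.-integrable setT (fun x => (phi x i 0 * phi x j 0)%:E))
  (q_phi2 : forall i j, q.-integrable setT (fun x => (phi x i 0 * phi x j 0)%:E)).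

Local Notation I01 := (`[0%R, 1%R]%classic : set R).

Let g_ge0 x : 0 <= g x.
Proof. exact: le_trans (ltW alpha_gt0) (g_ge x). Qed.

Let mphi i : measurable_fun setT (fun x => phi x i 0).
Proof. by apply/measurable_EFinP; exact: measurable_int (q_phi i). Qed.

Let mphi2 i j : measurable_fun setT (fun x => phi x i 0 * phi x j 0).
Proof. exact: measurable_funM (mphi i) (mphi j). Qed.

Let q_gphi i : q.-integrable setT (EFin \o (fun x => g x * phi x i 0)).
Proof. exact: (density_integrable mg pg g_ge0 (mphi i) (p_phi i)). Qed.

Let q_gphi2 i j :
  q.-integrable setT (EFin \o (fun x => g x * (phi x i 0 * phi x j 0))).
Proof. exact: (density_integrable mg pg g_ge0 (mphi2 i j) (p_phi2 i j)). Qed.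

Definition mix_weight rho x := rho * g x + 1 - rho.

Definition mix_score rho x := (g x - 1) / mix_weight rho x.

Definition mom2_mix rho := rho *: mom2 p phi + (1 - rho) *: mom2 q phi.

Local Notation dmu := (mom1 p phi - mom1 q phi).

Definition Drho rho := \int[q]_x ((g x - 1) ^+ 2 / mix_weight rho x).

Definition Frho rho := fine (gain_sup (mom2_mix rho) dmu).

Let q_dmu i : q.-integrable setT (EFin \o (fun x => ((g x - 1) *: phi x) i 0)).
Proof.
apply: (eq_integrable measurableT (EFin \o (fun x => g x * phi x i 0 - phi x i 0))).
  by move=> x _; rewrite /= mxE mulrBl mul1r.
exact: (integrableB measurableT (q_gphi i) (q_phi i)).
Qed.

Lemma dmuE : dmu = \col_i \int[q]_x ((g x - 1) *: phi x) i 0.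
Proof.
apply/matrixP => i k; rewrite !ord1 !mxE (density_Rintegral mg pg (mphi i) (p_phi i)).
rewrite -RintegralB //; last exact: q_phi.
by apply: eq_Rintegral => x _; rewrite mxE mulrBl mul1r.
Qed.

Lemma integrable_vdot_dmu a :
  q.-integrable setT (EFin \o (fun x => (g x - 1) * vdot a (phi x))).
Proof.
apply: (eq_integrable measurableT (EFin \o (fun x => vdot a ((g x - 1) *: phi x)))).
  by move=> x _; rewrite /= vdotZr.
exact: integrable_vdot q_dmu.
Qed.

Lemma vdot_dmu a : vdot a dmu = \int[q]_x ((g x - 1) * vdot a (phi x)).
Proof.
rewrite dmuE -(Rintegral_vdot _ q_dmu).
by apply: eq_Rintegral => x _; rewrite vdotZr.
Qed.

Let outer_entry (c : R) (v : 'cV[R]_m) i j :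
  (c *: (v *m v^T)) i j = c * (v i 0 * v j 0).
Proof. by rewrite !mxE big_ord1 !mxE. Qed.

Let q_mom2_mix rho i j : q.-integrable setT
  (EFin \o (fun x => (mix_weight rho x *: (phi x *m (phi x)^T)) i j)).
Proof.
apply: (eq_integrable measurableT (EFin \o (fun x =>
  rho * (g x * (phi x i 0 * phi x j 0)) + (1 - rho) * (phi x i 0 * phi x j 0)))).
  by move=> x _; rewrite /= outer_entry /mix_weight; congr EFin; ring.
exact: (integrableD measurableT (integrableZl measurableT rho (q_gphi2 i j))
  (integrableZl measurableT (1 - rho) (q_phi2 i j))).
Qed.

Lemma mom2_mixE rho : mom2_mix rho =
  \matrix_(i, j) \int[q]_x (mix_weight rho x *: (phi x *m (phi x)^T)) i j.
Proof.
apply/matrixP => i j; rewrite !mxE (density_Rintegral mg pg (mphi2 i j) (p_phi2 i j)).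
transitivity (\int[q]_x (rho * (g x * (phi x i 0 * phi x j 0)) +
                        (1 - rho) * (phi x i 0 * phi x j 0))).
  rewrite RintegralD //; last 2 first.
  - exact: (integrableZl measurableT _ (q_gphi2 i j)).
  - exact: (integrableZl measurableT _ (q_phi2 i j)).
  by rewrite !RintegralZl //; exact: q_phi2.
by apply: eq_Rintegral => x _; rewrite outer_entry /mix_weight; ring.
Qed.

Lemma integrable_mix_weight_vdot2 rho a :
  q.-integrable setT (EFin \o (fun x => mix_weight rho x * vdot a (phi x) ^+ 2)).
Proof.
apply: (eq_integrable measurableT
  (EFin \o (fun x => qform (mix_weight rho x *: (phi x *m (phi x)^T)) a))).
  by move=> x _; rewrite /= qformZl qform_outer.
exact: integrable_qform (q_mom2_mix rho).
Qed.

Lemma qform_mom2_mix rho a :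
  qform (mom2_mix rho) a = \int[q]_x (mix_weight rho x * vdot a (phi x) ^+ 2).
Proof.
rewrite mom2_mixE -(Rintegral_qform _ (q_mom2_mix rho)).
by apply: eq_Rintegral => x _; rewrite qformZl qform_outer.
Qed.

Lemma mom2_mix_sym rho : (mom2_mix rho)^T = mom2_mix rho.
Proof.
apply/matrixP => i j; rewrite !mom2_mixE !mxE; apply: eq_Rintegral => x _.
by rewrite !outer_entry [_ j 0 * _]mulrC.
Qed.

Section fixed_rho.
Variable rho : R.
Hypothesis rho01 : rho \in `[0%R, 1%R].

Lemma mix_weight_ge x : alpha <= mix_weight rho x.
Proof.
move: rho01; rewrite in_itv /= /mix_weight => /andP[r0 r1].
have h1 : 0 <= rho * (g x - alpha) by rewrite mulr_ge0 // subr_ge0.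
have h2 : 0 <= (1 - rho) * (1 - alpha) by rewrite mulr_ge0 // subr_ge0.
nra.
Qed.

Let mix_weight_gt0 x : 0 < mix_weight rho x.
Proof. exact: lt_le_trans alpha_gt0 (mix_weight_ge x). Qed.

Let measurable_mix_weight : measurable_fun setT (mix_weight rho).
Proof.
by apply: measurable_funB => //; apply: measurable_funD => //; exact: measurable_funM.
Qed.

Lemma Drho_integrand_bound x :
  0 <= (g x - 1) ^+ 2 / mix_weight rho x <= alpha ^- 3.
Proof.
rewrite divr_ge0 ?sqr_ge0 ?(ltW (mix_weight_gt0 x)) //=.
have ia1 : 1 <= alpha^-1 by rewrite invf_ge1.
have g1 : `|g x - 1| <= alpha^-1.
  move: (g_ge x) (g_le x) ia1; move: (alpha^-1) => ia gl gu ia1.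
  by rewrite ler_norml; apply/andP; split; have := alpha_gt0; lra.
have g1sq : (g x - 1) ^+ 2 <= alpha^-1 ^+ 2.
  by rewrite -real_normK ?num_real // !expr2; apply: ler_pM.
have -> : alpha ^- 3 = alpha^-1 ^+ 2 * alpha^-1 by rewrite -exprVn exprSr.
apply: ler_pM; rewrite ?sqr_ge0 ?invr_ge0 ?(ltW (mix_weight_gt0 x)) //.
by rewrite lef_pV2 ?posrE // mix_weight_ge.
Qed.

Lemma integrable_Drho_integrand :
  q.-integrable setT (EFin \o (fun x => (g x - 1) ^+ 2 / mix_weight rho x)).
Proof.
apply: (bounded_integrable _ _ (C := alpha ^- 3)) => // [|x _].
- apply: measurable_funM; first by apply: measurable_funX; exact: measurable_funB.
  apply: (@measurableT_comp _ _ _ _ _ _ (@GRing.inv R)); first exact: measurable_invr.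
  exact: measurable_mix_weight.
- by have /andP[k0 k1] := Drho_integrand_bound x; rewrite ger0_norm.
Qed.

Lemma Drho_bound : 0 <= Drho rho <= alpha ^- 3.
Proof.
rewrite Rintegral_ge0 => [/=|x _]; last by case/andP: (Drho_integrand_bound x).
apply: (le_trans (le_Rintegral (f2 := fun=> alpha ^- 3) measurableT
  integrable_Drho_integrand _ _)).
- exact: finite_measure_integrable_cst.
- by move=> x _; case/andP: (Drho_integrand_bound x).
have -> : \int[q]_x alpha ^- 3 = alpha ^- 3 * fine (q setT) by exact: Rintegral_cst.
by rewrite probability_setT mulr1.
Qed.

Let square_expand a s x :
  mix_weight rho x * (vdot a (phi x) + s * mix_score rho x) ^+ 2 =
  mix_weight rho x * vdot a (phi x) ^+ 2 + 2 * s * ((g x - 1) * vdot a (phi x)) +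
  s ^+ 2 * ((g x - 1) ^+ 2 / mix_weight rho x).
Proof.
rewrite /mix_score; have := mix_weight_gt0 x; move: (mix_weight rho x) => w w0.
by field; rewrite gt_eqF.
Qed.

Let q_cross a s :
  q.-integrable setT (EFin \o (fun x => 2 * s * ((g x - 1) * vdot a (phi x)))).
Proof. exact: (integrableZl measurableT _ (integrable_vdot_dmu a)). Qed.

Let q_Drho s : q.-integrable setT
  (EFin \o (fun x => s ^+ 2 * ((g x - 1) ^+ 2 / mix_weight rho x))).
Proof. exact: (integrableZl measurableT _ integrable_Drho_integrand). Qed.

Let q_quad_cross a s : q.-integrable setT (EFin \o (fun x =>
  mix_weight rho x * vdot a (phi x) ^+ 2 + 2 * s * ((g x - 1) * vdot a (phi x)))).
Proof.
exact: (integrableD measurableT (integrable_mix_weight_vdot2 rho a) (q_cross a s)).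
Qed.

Let q_square a s : q.-integrable setT
  (EFin \o (fun x => mix_weight rho x * (vdot a (phi x) + s * mix_score rho x) ^+ 2)).
Proof.
apply: (eq_integrable measurableT (EFin \o (fun x =>
  mix_weight rho x * vdot a (phi x) ^+ 2 + 2 * s * ((g x - 1) * vdot a (phi x)) +
  s ^+ 2 * ((g x - 1) ^+ 2 / mix_weight rho x)))) => [x _|].
  by rewrite /= square_expand.
exact: (integrableD measurableT (q_quad_cross a s) (q_Drho s)).
Qed.

Lemma block_quad_Drho a s : block_quad (mom2_mix rho) dmu a s (Drho rho) =
  \int[q]_x (mix_weight rho x * (vdot a (phi x) + s * mix_score rho x) ^+ 2).
Proof.
under eq_Rintegral do rewrite square_expand.
rewrite (RintegralD measurableT (q_quad_cross a s) (q_Drho s)).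
rewrite (RintegralD measurableT (integrable_mix_weight_vdot2 rho a) (q_cross a s)).
rewrite !RintegralZl ?integrable_vdot_dmu ?integrable_Drho_integrand //.
by rewrite -qform_mom2_mix -vdot_dmu.
Qed.

Lemma block_quad_Drho_ge0 a s : 0 <= block_quad (mom2_mix rho) dmu a s (Drho rho).
Proof.
rewrite block_quad_Drho; apply: Rintegral_ge0 => x _.
by rewrite mulr_ge0 ?sqr_ge0 ?ltW.
Qed.

Lemma block_quad_Drho_eq0P a s :
  block_quad (mom2_mix rho) dmu a s (Drho rho) = 0 <->
  {ae q, forall x, vdot a (phi x) + s * mix_score rho x = 0}.
Proof.
rewrite block_quad_Drho (ge0_Rintegral_eq0P (q_square a s)) => [|x]; last first.
  by rewrite mulr_ge0 ?sqr_ge0 ?ltW.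
split; apply: filterS => x; last by move=> ->; rewrite expr0n mulr0.
by move/eqP; rewrite mulf_eq0 gt_eqF //= sqrf_eq0 => /eqP.
Qed.

Lemma mom2_mix_psd : psd (mom2_mix rho).
Proof.
split; first exact: mom2_mix_sym.
move=> a; rewrite -mulmxA -/(vdot a _) -/(qform _ a) qform_mom2_mix.
by apply: Rintegral_ge0 => x _; rewrite mulr_ge0 ?sqr_ge0 ?ltW.
Qed.

Lemma mom2_mix_solvable : exists theta, mom2_mix rho *m theta = dmu.
Proof.
apply: sym_mulmx_solvable; first exact: mom2_mix_sym.
move=> a Ma0; have : block_quad (mom2_mix rho) dmu a 0 (Drho rho) = 0.
  by rewrite /block_quad /qform Ma0 /vdot mulmx0 mxE mulr0 expr0n /= !mul0r !addr0.
move/block_quad_Drho_eq0P => a_phi0; rewrite vdot_dmu; apply: ae_eq0_Rintegral.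
  by apply/measurable_EFinP; exact: (measurable_int _ (integrable_vdot_dmu a)).
by apply: filterS a_phi0 => x; rewrite mul0r addr0 => ->; rewrite mulr0.
Qed.

Lemma Frho_gain theta :
  mom2_mix rho *m theta = dmu -> Frho rho = gain (mom2_mix rho) dmu theta.
Proof. by move=> Mtheta; rewrite /Frho (gain_supE mom2_mix_psd Mtheta). Qed.

Lemma Frho_ge0 : 0 <= Frho rho.
Proof.
have [theta Mtheta] := mom2_mix_solvable.
rewrite (Frho_gain Mtheta) -(gain0 (mom2_mix rho) dmu).
exact: gain_le_solution mom2_mix_psd Mtheta.
Qed.

Lemma Frho_le_Drho : Frho rho <= Drho rho.
Proof.
have [theta Mtheta] := mom2_mix_solvable.
by rewrite (Frho_gain Mtheta) -subr_ge0 -block_quad_gainN; exact: block_quad_Drho_ge0.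
Qed.

Lemma psd_blockF_FrhoP T :
  psd (blockF (mom2 p phi) (mom2 q phi) dmu rho T) <-> Frho rho <= T.
Proof.
have [theta Mtheta] := mom2_mix_solvable.
rewrite /blockF -/(mom2_mix rho) psd_block_mxP ?mom2_mix_sym //.
rewrite block_quad_ge0P => [|a]; last exact: psd_qform_ge0 mom2_mix_psd.
rewrite (Frho_gain Mtheta); split=> [|le_T a]; first exact.
by apply: le_trans le_T; exact: gain_le_solution mom2_mix_psd Mtheta.
Qed.

Lemma Frho_eq_DrhoP : Frho rho = Drho rho <->
  exists theta, {ae q, forall x, mix_score rho x = vdot theta (phi x)}.
Proof.
have [theta Mtheta] := mom2_mix_solvable; rewrite (Frho_gain Mtheta).
split=> [gainE|[a score_a]].
  exists theta; have : block_quad (mom2_mix rho) dmu (- theta) 1 (Drho rho) = 0.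
    by rewrite block_quad_gainN gainE subrr.
  move/block_quad_Drho_eq0P; apply: filterS => x.
  by rewrite vdotNl mul1r addrC => /eqP; rewrite subr_eq0 => /eqP.
have : block_quad (mom2_mix rho) dmu (- a) 1 (Drho rho) = 0.
  apply/block_quad_Drho_eq0P; apply: filterS score_a => x ->.
  by rewrite vdotNl mul1r addNr.
rewrite block_quad_gainN => /eqP; rewrite subr_eq0 => /eqP Da.
apply/le_anti/andP; split; first by rewrite -(Frho_gain Mtheta); exact: Frho_le_Drho.
by rewrite Da; exact: gain_le_solution mom2_mix_psd Mtheta.
Qed.

End fixed_rho.

Lemma measurable_Frho : measurable_fun setT Frho.
Proof.
apply: (measurableT_comp (fine_measurable measurableT)).
apply: lower_semicontinuous_measurable.
apply: (lower_semicontinuous_sup (f := fun theta rho => gain (mom2_mix rho) dmu theta)).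
move=> theta; pose Sp := mom2 p phi; pose Sq := mom2 q phi.
have -> : (fun rho => gain (mom2_mix rho) dmu theta) = (fun rho =>
    2 * vdot theta dmu - qform Sq theta + rho * (qform Sq theta - qform Sp theta)).
  by apply/funext => rho; rewrite /gain /mom2_mix qformDl !qformZl; ring.
move=> r; apply: cvgD; first exact: cvg_cst.
by apply: cvgM; [exact: cvg_id|exact: cvg_cst].
Qed.

Variable nu : probability R R.

Let fdiv_kernel (z : R * X) : \bar R :=
  (\1_I01 z.1 * ((g z.2 - 1) ^+ 2 / (2 * (z.1 * g z.2 + 1 - z.1))))%:E.

Let fdiv_integrand_half rho x : (g x - 1) ^+ 2 / (2 * (rho * g x + 1 - rho)) =
  2^-1 * ((g x - 1) ^+ 2 / mix_weight rho x).
Proof. by rewrite /mix_weight invfM mulrCA. Qed.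

Let fdiv_kernel_ge0 z : (0 <= fdiv_kernel z)%E.
Proof.
rewrite lee_fin indicE; have [/= r01|] := boolP (z.1 \in _); last by rewrite mul0r.
rewrite mul1r fdiv_integrand_half mulr_ge0 ?invr_ge0 //.
by case/andP: (Drho_integrand_bound (set_mem r01) z.2).
Qed.

Let measurable_fdiv_kernel : measurable_fun setT fdiv_kernel.
Proof.
apply/measurable_EFinP; apply: measurable_funM.
  exact: measurableT_comp (measurable_indic _) measurable_fst.
have mg2 : measurable_fun setT (fun z : R * X => g z.2).
  exact: measurableT_comp mg measurable_snd.
apply: measurable_funM; first by apply: measurable_funX; exact: measurable_funB.
apply: (@measurableT_comp _ _ _ _ _ _ (@GRing.inv R)); first exact: measurable_invr.
apply: measurable_funM => //; apply: measurable_funB => //; apply: measurable_funD => //.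
by apply: measurable_funM => //; exact: measurable_fst.
Qed.

Let fubini_F_kernel rho : fubini_F q fdiv_kernel rho =
  if rho \in I01 then (2^-1 * Drho rho)%:E else 0%E.
Proof.
rewrite /fubini_F; case: ifPn => r01; last first.
  under eq_integral => x _ do rewrite /fdiv_kernel /= indicE (negbTE r01) mul0r.
  exact: integral0.
under eq_integral => x _ do rewrite /fdiv_kernel /= indicE r01 mul1r fdiv_integrand_half.
have q_half := integrableZl measurableT 2^-1 (integrable_Drho_integrand (set_mem r01)).
rewrite /Drho -RintegralZl //; last exact: integrable_Drho_integrand (set_mem r01).
by rewrite /Rintegral fineK // (integrable_fin_num measurableT q_half).
Qed.

Lemma fdivE : fdiv nu q g = (\int[nu]_(rho in I01) (2^-1 * Drho rho)%:E)%E.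
Proof.
transitivity (\int[q]_x fubini_G nu fdiv_kernel x)%E.
  apply: eq_integral => x _; rewrite /fgen /fubini_G [LHS]integral_mkcond.
  apply: eq_integral => r _; rewrite patchE /fdiv_kernel indicE /=.
  by case: ifP; rewrite ?mul1r ?mul0r.
rewrite -(@fubini_tonelli2 _ _ _ _ _ nu q _ measurable_fdiv_kernel fdiv_kernel_ge0).
rewrite (@fubini_tonelli1 _ _ _ _ _ nu q _ measurable_fdiv_kernel fdiv_kernel_ge0).
rewrite [RHS]integral_mkcond.
by apply: eq_integral => r _; rewrite fubini_F_kernel patchE.
Qed.

Let measurable_half_Drho : measurable_fun I01 (fun rho => (2^-1 * Drho rho)%:E).
Proof.
have := @measurable_fun_fubini_tonelli_F _ _ _ _ _ q _
  measurable_fdiv_kernel fdiv_kernel_ge0.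
move/measurable_funTS/(measurable_fun_eqP _ _).1; apply => rho r01.
by rewrite fubini_F_kernel r01.
Qed.

Let measurable_half_Frho : measurable_fun I01 (fun rho => (2^-1 * Frho rho)%:E).
Proof.
apply/measurable_EFinP/measurable_funTS.
by apply: measurable_funM => //; exact: measurable_Frho.
Qed.

Lemma FmomE : Fmom nu p q phi = (\int[nu]_(rho in I01) (2^-1 * Frho rho)%:E)%E.
Proof.
have mFrho : measurable_fun I01 (fun rho => (Frho rho)%:E).
  by apply/measurable_EFinP/measurable_funTS; exact: measurable_Frho.
have -> : (\int[nu]_(rho in I01) (2^-1 * Frho rho)%:E =
    (2^-1)%:E * \int[nu]_(rho in I01) (Frho rho)%:E)%E.
  by rewrite -ge0_integralZl_EFin // => rho r01; rewrite lee_fin Frho_ge0.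
apply/le_anti/andP; split.
  apply: ereal_inf_lbound; exists Frho => //; split; first exact: measurable_Frho.
  by move=> rho r01; apply/psd_blockF_FrhoP.
apply: le_ereal_inf_tmp => _ [t [mt t_feasible] <-].
rewrite lee_wpmul2l ?lee_fin ?invr_ge0 //; apply: ge0_le_integral => //.
- by move=> rho r01; rewrite lee_fin Frho_ge0.
- exact/measurable_EFinP/measurable_funTS.
- by move=> rho r01; rewrite lee_fin -psd_blockF_FrhoP //; exact: t_feasible.
Qed.

Lemma Fmom_le_fdiv : (Fmom nu p q phi <= fdiv nu q g)%E.
Proof.
rewrite FmomE fdivE; apply: ge0_le_integral => // [rho r01|rho r01].
  by rewrite lee_fin mulr_ge0 ?invr_ge0 ?Frho_ge0.
by rewrite lee_fin ler_wpM2l ?invr_ge0 ?Frho_le_Drho.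
Qed.

Let integrable_half (f : R -> R) :
  measurable_fun I01 (fun rho => (2^-1 * f rho)%:E) ->
  (forall rho, rho \in `[0%R, 1%R] -> 0 <= f rho <= Drho rho) ->
  nu.-integrable I01 (fun rho => (2^-1 * f rho)%:E).
Proof.
move=> mf fD; apply: (bounded_integrable _ _ (C := 2^-1 * alpha ^- 3)) => // [|rho r01].
  exact/measurable_EFinP.
have /andP[f0 fle] := fD rho r01; have /andP[_ Dle] := Drho_bound r01.
by rewrite ger0_norm ?mulr_ge0 ?invr_ge0 // ler_wpM2l ?invr_ge0 // (le_trans fle).
Qed.

Lemma Fmom_eq_fdivP : Fmom nu p q phi = fdiv nu q g <->
  {ae nu, forall rho, rho \in `[0%R, 1%R] ->
     exists theta, {ae q, forall x, mix_score rho x = vdot theta (phi x)}}.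
Proof.
split=> [|ae_lin].
  rewrite FmomE fdivE => /(le_integral_eq_ae (measurable_itv _)
    (integrable_half measurable_half_Frho _)
    (integrable_half measurable_half_Drho _)) ae_half.
  apply: filterS (ae_half _ _ _) => [rho half_eq r01|rho r01|rho r01|rho r01].
  - apply/(Frho_eq_DrhoP r01)/(mulfI (_ : 2^-1 != 0)); last exact: half_eq.
    by rewrite invr_eq0 pnatr_eq0.
  - by rewrite Frho_ge0 ?Frho_le_Drho.
  - by rewrite lexx andbT; case/andP: (Drho_bound r01).
  - by rewrite ler_wpM2l ?invr_ge0 ?Frho_le_Drho.
apply/le_anti; rewrite Fmom_le_fdiv FmomE fdivE /=.
apply: ae_ge0_le_integral => // [rho r01|rho r01|].
- by rewrite lee_fin mulr_ge0 ?invr_ge0 //; case/andP: (Drho_bound r01).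
- by rewrite lee_fin mulr_ge0 ?invr_ge0 ?Frho_ge0.
apply: filterS ae_lin => rho score_lin r01.
by rewrite ((Frho_eq_DrhoP r01).2 (score_lin r01)).
Qed.

End moment_divergence.

Theorem proposition1 (R : realType) (d : measure_display) (X : measurableType d)
  (m : nat) (phi : X -> 'cV[R]_m) (nu : probability R R) (p q : probability X R)
  (g : X -> R) (alpha : R) :
  nu `[0%R, 1%R]%classic = 1%E ->
  0 < alpha <= 1 ->
  measurable_fun setT g ->
  (forall x, alpha <= g x <= alpha^-1) ->
  (forall A, measurable A -> p A = (\int[q]_(x in A) (g x)%:E)%E) ->
  (forall i, p.-integrable setT (fun x => (phi x i 0)%:E)) ->
  (forall i, q.-integrable setT (fun x => (phi x i 0)%:E)) ->
  (forall i j, p.-integrable setT (fun x => (phi x i 0 * phi x j 0)%:E)) ->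
  (forall i j, q.-integrable setT (fun x => (phi x i 0 * phi x j 0)%:E)) ->
  (Fmom nu p q phi <= fdiv nu q g)%E /\
  (Fmom nu p q phi = fdiv nu q g <->
   {ae nu, forall rho, rho \in `[0%R, 1%R] ->
      exists theta : 'cV[R]_m,
        {ae q, forall x, (g x - 1) / (rho * g x + 1 - rho) = (theta^T *m phi x) 0 0}}).
Proof.
move=> _ /andP[alpha_gt0 alpha_le1] mg g_bounds pg p_phi q_phi p_phi2 q_phi2.
have g_ge x : alpha <= g x by case/andP: (g_bounds x).
have g_le x : g x <= alpha^-1 by case/andP: (g_bounds x).
split; first exact: (Fmom_le_fdiv alpha_gt0 alpha_le1 mg g_ge g_le pg).
exact: (Fmom_eq_fdivP alpha_gt0 alpha_le1 mg g_ge g_le pg).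
Qed.
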